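(* For $n\ge 1$ and $1\le p\le n$ let $b(n,p)$ be the number of $\alpha\in\mathcal{ORCT}^*_n$ with $|\mathrm{Im}\,\alpha|=p$ and exactly one fixed point, and set $b(n,0)=0$ for all $n\ge 0$. Then $b(n,1)=n$ for all $n\ge1$, $b(2,2)=0$, and for all $n\ge p\ge 2$, $$b(n,p)=(n-p+1)\binom{n-2}{p-1}+b(n-2,p-2).$$
   Context: $X_n=\{1,2,\dots,n\}$ with its usual order; maps are written on the right ($x\alpha$). A map $\alpha:X_n\to X_n$ is order-reversing if $x\le y$ implies $x\alpha\ge y\alpha$, and a contraction if $|x\alpha-y\alpha|\le|x-y|$ for all $x,y$. $\mathcal{ORCT}^*_n$ is the set of all order-reversing contractions $X_n\to X_n$ defined on all of $X_n$ (this includes the constant maps). A fixed point of $\alpha$ is $x$ with $x\alpha=x$. Binomial coefficients $\binom{a}{b}$ with $b>a\ge0$ are $0$. *)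

(* X_n = {1..n} is modelled by 'I_n = {0..n-1} (shift by one,
   which preserves order, distances and fixed points). *)
From mathcomp Require Import all_boot.
Set Implicit Arguments. Unset Strict Implicit. Unset Printing Implicit Defensive.

Definition distn (a b : nat) : nat := maxn a b - minn a b.

Definition orct (n : nat) (f : {ffun 'I_n -> 'I_n}) : bool :=
  [forall x : 'I_n, forall y : 'I_n,
     ((x <= y) ==> (f y <= f x)) && (distn (f x) (f y) <= distn x y)].

Definition rank_of (n : nat) (f : {ffun 'I_n -> 'I_n}) : nat :=
  #|[set f x | x : 'I_n]|.

Definition nfix (n : nat) (f : {ffun 'I_n -> 'I_n}) : nat :=
  #|[set x : 'I_n | f x == x]|.

Definition b (n p : nat) : nat :=
  if p == 0 then 0 else
  #|[set f : {ffun 'I_n -> 'I_n} | [&& orct f, rank_of f == p & nfix f == 1]]|.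

From mathcomp Require Import all_boot zify.

(* An order-reversing contraction f of {0,...,m} decreases by 0 or 1
   at each step, so it is determined by t = f 0 and the word s in {0,1}^m of its
   descents: f i = t - #ones(s_0 ... s_(i-1)).  Conversely every pair (t, s) with
   #ones(s) <= t <= m decodes to such a contraction.  Its image has #ones(s) + 1
   points, and (f being order-reversing, fixed points are unique) it has exactly
   one fixed point iff the strictly increasing trajectory x |-> x + #ones(s_<x)
   passes through t.  Hence b(m+1, q+1) = sum_(q <= t <= m) N(m, q, t), where
   N(m, q, A) counts the words of length m with q ones whose trajectory hits A.

   Splitting words on their first letter gives a recursion for N,
   from which N(m+1, q+1, A+1) + N(m, q, A) = C(m+1, q+1) follows by induction.
   Summing this identity over t yields the three statements of the theorem. *)

Definition ones (s : seq bool) : nat := count id s.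

Definition reach (A : nat) (s : seq bool) : bool :=
  has (fun x => x + ones (take x s) == A) (iota 0 (size s).+1).

Fixpoint words (m : nat) : seq (seq bool) :=
  if m is m'.+1 then [seq false :: s | s <- words m'] ++ [seq true :: s | s <- words m']
  else [:: [::]].

Definition nreach (m q A : nat) : nat :=
  count (fun s => (ones s == q) && reach A s) (words m).

Lemma mem_words m s : (s \in words m) = (size s == m).
Proof.
elim: m s => [|m IH] [|x s] //=; rewrite mem_cat.
  by apply/norP; split; apply/mapP => -[].
have cons_inj y : injective (cons y : seq bool -> seq bool) by move=> ? ? [].
rewrite eqSS -IH; case: x; rewrite mem_map //.
  by case: mapP => [[? _ [=]]|].
by case: mapP => [[? _ [=]]|]; rewrite ?orbF.
Qed.

Lemma uniq_words m : uniq (words m).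
Proof.
elim: m => [|m IH] //=; rewrite cat_uniq !map_inj_uniq ?IH // => [|x y []//|x y []//].
by rewrite andbT; apply/hasP => -[x /mapP [y _ ->] /mapP [z _]].
Qed.

(* Reaching from the first letter: a 0 shifts the trajectory by one, a 1 by two. *)
Lemma reach_nil A : reach A [::] = (A == 0).
Proof. by rewrite /reach /= orbF eq_sym. Qed.

Lemma reach_cons A x s : reach A (x :: s) = (A == 0) || ((x < A) && reach (A - x.+1) s).
Proof.
have has_cons (a : pred nat) y l : has a (y :: l) = a y || has a l by [].
have iota0S k : iota 0 k.+1 = 0 :: map succn (iota 0 k).
  by rewrite [LHS]/= -[1]/(1 + 0) iotaDl.
rewrite /reach [size _]/= iota0S has_cons has_map take0 eq_sym addn0; congr (_ || _).
case: (ltnP x A) => hx; rewrite ?andTb ?andFb.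
  by apply: eq_has => y /=; rewrite /ones /=; apply/eqP/eqP; lia.
by apply/hasP => -[y _] /=; rewrite /ones /=; move/eqP; lia.
Qed.

(* Every trajectory starts at 0. *)
Lemma reach0 s : reach 0 s.
Proof. by case: s => [|x s]; rewrite ?reach_nil ?reach_cons. Qed.

Lemma count_ones_words m q : count (fun s => ones s == q) (words m) = 'C(m, q).
Proof.
elim: m q => [|m IH] q; first by case: q.
rewrite /= count_cat !count_map (eq_count (a2 := fun s => ones s == q)) // IH.
case: q => [|q]; first by rewrite (eq_count (a2 := pred0)) ?count_pred0 ?bin0.
by rewrite binS -!IH; congr (_ + _); apply: eq_count.
Qed.

Lemma nreach_nil q A : nreach 0 q A = (q == 0) && (A == 0).
Proof. by rewrite /nreach /= reach_nil addn0 eq_sym. Qed.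

Lemma nreach_A0 m q : nreach m q 0 = 'C(m, q).
Proof. by rewrite -count_ones_words; apply: eq_count => s; rewrite reach0 andbT. Qed.

Lemma nreachS m q A : nreach m.+1 q A.+1 =
  nreach m q A + (if q is q'.+1 then (if A is A'.+1 then nreach m q' A' else 0) else 0).
Proof.
rewrite /nreach /= count_cat !count_map; congr (_ + _).
  by apply: eq_count => s /=; rewrite reach_cons subn1.
case: q => [|q]; first by rewrite (eq_count (a2 := pred0)) ?count_pred0.
case: A => [|A].
  by rewrite (eq_count (a2 := pred0)) ?count_pred0 // => s /=; rewrite reach_cons andbF.
by apply: eq_count => s /=; rewrite reach_cons subSS subn1.
Qed.

(* The only word without ones has trajectory 0, 1, ..., m. *)
Lemma nreach_q0 m A : nreach m 0 A = (A <= m).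
Proof.
elim: m A => [|m IH] [|A]; rewrite ?nreach_nil ?nreach_A0 ?bin0 //.
by rewrite nreachS IH addn0.
Qed.

(* Combinatorially, a
   word of length m+1 with q+1 ones misses A+1 iff it is obtained by inserting a 1
   where the trajectory of a word of length m with q ones reaches A; the proof
   below is an induction on m using the first-letter recursion. *)
Lemma nreach_complement m q A : A <= m.+1 + q ->
  nreach m.+1 q.+1 A.+1 + nreach m q A = 'C(m.+1, q.+1).
Proof.
elim: m q A => [|m IH] q A hA.
  by rewrite nreachS !nreach_nil; case: q A hA => [|q] [|[|A]].
rewrite nreachS; case: A hA => [|A] hA.
  by rewrite addn0 !nreach_A0 [in RHS]binS.
rewrite (nreachS m q A).
have IH_qA := IH q A ltac:(lia).
suff first_zero : nreach m.+1 q A +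
    (if q is q'.+1 then (if A is A'.+1 then nreach m q' A' else 0) else 0) = 'C(m.+1, q).
  by rewrite [in RHS]binS; lia.
case: q hA {IH_qA} => [|q] hA.
  by rewrite addn0 nreach_q0 bin0; apply/eqP; rewrite eqb1; lia.
case: A hA => [|A] hA; first by rewrite addn0 nreach_A0.
by rewrite IH; last lia.
Qed.

Lemma nreach_one m A : A <= m -> nreach m.+1 1 A.+1 = m.
Proof.
move=> hA; have := nreach_complement m 0 A ltac:(lia).
by rewrite nreach_q0 hA bin1 addn1 => -[].
Qed.

Lemma nreach_shift2 m q A : A <= m + q ->
  nreach m.+2 q.+2 A.+2 = 'C(m.+1, q.+2) + nreach m q A.
Proof.
move=> hA; have := nreach_complement m.+1 q.+1 A.+1 ltac:(lia).
have := nreach_complement m q A ltac:(lia).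
rewrite [in X in _ -> X]binS; lia.
Qed.

(* Unfolded form of orct, quantifying over x <= y only (the distance is symmetric). *)
Lemma orctP {n} (f : {ffun 'I_n -> 'I_n}) :
  reflect (forall x y : 'I_n, x <= y -> f y <= f x /\ distn (f x) (f y) <= distn x y)
          (orct f).
Proof.
apply: (iffP forallP) => [h x y hxy | h x].
  by have /forallP /(_ y) /andP [/implyP /(_ hxy) ? ?] := h x.
apply/forallP => y; apply/andP; split.
  by apply/implyP => hxy; case: (h x y hxy).
case: (leqP x y) => hxy; first by case: (h x y hxy).
have [_] := h y x (ltnW hxy).
by rewrite /distn maxnC minnC [maxn x y]maxnC [minn x y]minnC.
Qed.

(* An order-reversing map has at most one fixed point. *)
Lemma nfix_orct n (f : {ffun 'I_n -> 'I_n}) : orct f ->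
  (nfix f == 1) = [exists x, f x == x].
Proof.
move=> /orctP ho; rewrite /nfix.
case: existsP => [[x0 /eqP fx0] | nofix].
  suff -> : [set x | f x == x] = [set x0] by rewrite cards1.
  apply/setP => y; rewrite !inE; apply/eqP/eqP => [fy | ->//].
  apply: ord_inj; case: (leqP x0 y) => hy.
    by have [] := ho _ _ hy; rewrite fx0 fy; lia.
  by have [] := ho _ _ (ltnW hy); rewrite fx0 fy; lia.
suff -> : [set x | f x == x] = set0 by rewrite cards0.
by apply/setP => y; rewrite !inE; apply/negbTE/negP => fy; apply: nofix; exists y.
Qed.

Lemma ones_take_mono s x y : x <= y ->
  ones (take x s) <= ones (take y s) <= ones (take x s) + (y - x).
Proof.
move=> /subnKC <-; move: (y - x) => d; rewrite addKn takeD /ones count_cat leq_addr /=.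
by rewrite leq_add2l (leq_trans (count_size _ _)) // size_take geq_minl.
Qed.

Lemma ones_take_le x s : ones (take x s) <= ones s.
Proof. by rewrite -{2}(cat_take_drop x s) /ones count_cat leq_addr. Qed.

Lemma ones_take_onto s k : k <= ones s -> exists2 i, i <= size s & ones (take i s) = k.
Proof.
elim: s k => [|x s IH] [|k] hk; try by exists 0.
have [i hi e] : exists2 i, i <= size s & ones (take i s) = k.+1 - x.
  by apply: IH; move: hk; rewrite /ones /=; case: x => /=; lia.
by exists i.+1 => //; rewrite /ones /= -/(ones _) e; case: x {hk e} => /=; lia.
Qed.


Definition decode m (t : nat) (s : seq bool) : {ffun 'I_m.+1 -> 'I_m.+1} :=
  [ffun i : 'I_m.+1 => inord (t - ones (take i s))].

Definition descents {m} (f : {ffun 'I_m.+1 -> 'I_m.+1}) : seq bool :=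
  [seq f (inord i) != f (inord i.+1) | i <- iota 0 m].

Section Decode.
Context {m t : nat} {s : seq bool}.
Hypotheses (t_le_m : t <= m) (ones_le_t : ones s <= t) (size_s : size s = m).

Lemma decode_val (i : 'I_m.+1) : decode m t s i = t - ones (take i s) :> nat.
Proof. by rewrite ffunE inordK // ltnS (leq_trans (leq_subr _ _)). Qed.

Lemma decode_orct : orct (decode m t s).
Proof.
apply/orctP => x y hxy; rewrite !decode_val /distn.
have /andP [lo hi] := ones_take_mono s x y hxy.
by have := ones_take_le y s; split; lia.
Qed.

(* The image of decode m t s is {t - k | k <= ones s}. *)
Lemma decode_rank : rank_of (decode m t s) = (ones s).+1.
Proof.
have val_k (k : 'I_(ones s).+1) : (inord (t - k) : 'I_m.+1) = t - k :> nat.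
  by rewrite inordK //; lia.
rewrite /rank_of -[(ones s).+1]card_ord -(card_imset _ (_ : injective
    (fun k : 'I_(ones s).+1 => inord (t - k) : 'I_m.+1))); last first.
  move=> k1 k2 /(congr1 val); rewrite /= !val_k => e.
  by apply: ord_inj; have := ltn_ord k1; have := ltn_ord k2; lia.
apply: eq_card => y; apply/imsetP/imsetP => -[x _ ->].
  have hx : ones (take x s) < (ones s).+1 by rewrite ltnS ones_take_le.
  by exists (Ordinal hx) => //; apply: ord_inj; rewrite decode_val val_k.
have [|i hi e] := @ones_take_onto s x; first by rewrite -ltnS.
have hi' : i < m.+1 by rewrite ltnS -size_s.
by exists (Ordinal hi') => //; apply: ord_inj; rewrite decode_val /= e val_k.
Qed.

(* x is a fixed point iff the trajectory is at t at time x. *)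
Lemma decode_fixpoint : [exists x, decode m t s x == x] = reach t s.
Proof.
apply/existsP/hasP => [[x /eqP /(congr1 (@nat_of_ord _))] | [x]].
  rewrite decode_val => e; exists (nat_of_ord x); first by rewrite mem_iota size_s /=.
  by apply/eqP; have := ones_take_le x s; lia.
rewrite mem_iota size_s /= => hx /eqP e.
exists (Ordinal hx); apply/eqP/ord_inj; rewrite decode_val /=.
by have := ones_take_le x s; lia.
Qed.

(* Decoding is injective on valid codes, since descents recovers the word. *)
Lemma descents_decode : descents (decode m t s) = s.
Proof.
apply: (@eq_from_nth _ false); rewrite ?size_map ?size_iota // => i hi.
rewrite (nth_map 0) ?size_iota // nth_iota // add0n.
rewrite -(inj_eq (@ord_inj _)) !decode_val !inordK; try lia.
have := ones_take_le i.+1 s; rewrite (take_nth false) ?size_s //.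
rewrite /ones -cats1 !count_cat /=; move: ones_le_t; rewrite /ones.
by case: (nth false s i) => /= h1 h2; apply/eqP; lia.
Qed.

End Decode.

Lemma size_descents {m} (f : {ffun 'I_m.+1 -> 'I_m.+1}) : size (descents f) = m.
Proof. by rewrite size_map size_iota. Qed.

Section Encode.
Context {m : nat} {f : {ffun 'I_m.+1 -> 'I_m.+1}}.
Hypothesis f_orct : orct f.

Lemma orct_step i : i < m ->
  f (inord i) = f (inord i.+1) + (f (inord i) != f (inord i.+1)) :> nat.
Proof.
move=> hi; have val_i : (inord i : 'I_m.+1) = i :> nat by rewrite inordK //; lia.
have val_Si : (inord i.+1 : 'I_m.+1) = i.+1 :> nat by rewrite inordK.
have [decr] := elimT (orctP f) f_orct (inord i) (inord i.+1) ltac:(by rewrite val_i val_Si).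
rewrite /distn val_i val_Si -(inj_eq (@ord_inj _)); case: eqP => /=; lia.
Qed.

Lemma orct_prefix i : i <= m -> f ord0 = f (inord i) + ones (take i (descents f)) :> nat.
Proof.
elim: i => [|i IH] hi.
  by rewrite take0 addn0 (_ : inord 0 = ord0) //; apply: ord_inj; rewrite inordK.
rewrite IH 1?ltnW // /descents -!map_take !take_iota (minn_idPl (ltnW hi)) (minn_idPl hi).
rewrite (_ : iota 0 i.+1 = iota 0 i ++ [:: i]) ?map_cat; last by rewrite -addn1 iotaD.
by rewrite /ones count_cat /= (orct_step i hi); lia.
Qed.

Lemma decode_descents : decode m (f ord0) (descents f) = f.
Proof.
apply/ffunP => x; apply: ord_inj; rewrite decode_val; last by rewrite -ltnS.
by rewrite (orct_prefix x (ltn_ord x)) inord_val addnK.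
Qed.

Lemma ones_descents : ones (descents f) <= f ord0.
Proof.
by rewrite (orct_prefix m (leqnn m)) take_oversize ?size_map ?size_iota ?leq_addl.
Qed.

End Encode.

Lemma decode_inj m t1 s1 t2 s2 :
  t1 <= m -> ones s1 <= t1 -> size s1 = m ->
  t2 <= m -> ones s2 <= t2 -> size s2 = m ->
  decode m t1 s1 = decode m t2 s2 -> (t1, s1) = (t2, s2).
Proof.
move=> t1m o1 z1 t2m o2 z2 e; congr pair.
  have := congr1 (fun f : {ffun _ -> _} => nat_of_ord (f ord0)) e.
  by rewrite !decode_val //= !take0 !subn0.
by rewrite -(descents_decode t1m o1 z1) e descents_decode.
Qed.

Lemma decode_fix1 {m t s} : t <= m -> ones s <= t -> size s = m -> reach t s ->
  [&& orct (decode m t s), rank_of (decode m t s) == (ones s).+1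
    & nfix (decode m t s) == 1].
Proof.
move=> tm ot zs rt.
by rewrite decode_orct // decode_rank // eqxx nfix_orct ?decode_orct // decode_fixpoint.
Qed.

Lemma encode_fix1 {m q} {f : {ffun 'I_m.+1 -> 'I_m.+1}} :
  [&& orct f, rank_of f == q.+1 & nfix f == 1] ->
  [/\ ones (descents f) = q, reach (f ord0) (descents f) & decode m (f ord0) (descents f) = f].
Proof.
case/and3P=> fo /eqP rf; rewrite nfix_orct // => fix1.
have ot := ones_descents fo; have zs := size_descents f.
have tm : f ord0 <= m by rewrite -ltnS.
split; last exact: decode_descents.
  by apply: succn_inj; rewrite -rf -{2}(decode_descents fo) decode_rank.
by rewrite -(decode_fixpoint tm ot zs) (decode_descents fo).
Qed.

(* b(m+1, q+1) = sum_(q <= t <= m) N(m, q, t): decoding is a bijection from the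
   codes (t, s) with q <= t <= m, size s = m, ones s = q and reach t s. *)
Lemma b_sum m q : b m.+1 q.+1 = \sum_(q <= t < m.+1) nreach m q t.
Proof.
pose codes := [seq (t, s) | t <- index_iota q m.+1, s <- words m].
pose good (c : nat * seq bool) := (ones c.2 == q) && reach c.1 c.2.
pose good_codes := filter good codes.
have good_ok c : c \in good_codes ->
    [/\ c.1 <= m, ones c.2 <= c.1, size c.2 = m, ones c.2 = q & reach c.1 c.2].
  rewrite mem_filter => /andP [/andP [/eqP oq rc]] /allpairsP [[t s] [/=]].
  rewrite mem_index_iota mem_words => /andP [qt tm] /eqP zs c_ts.
  by move: oq rc; rewrite c_ts /= => oq; split; rewrite ?oq //; lia.
have count_codes : count good codes = \sum_(q <= t < m.+1) nreach m q t.
  rewrite -sum1_count big_mkcond big_allpairs; apply: eq_bigr => t _.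
  by rewrite -big_mkcond sum1_count.
have uniq_decoded : uniq [seq decode m c.1 c.2 | c <- good_codes].
  rewrite map_inj_in_uniq ?filter_uniq ?allpairs_uniq ?iota_uniq ?uniq_words //.
    by move=> [t1 s1] [t2 s2] _ _ [-> ->].
  move=> [t1 s1] [t2 s2] /good_ok [/= t1m o1 z1 _ _] /good_ok [/= t2m o2 z2 _ _].
  exact: decode_inj.
rewrite -count_codes -size_filter -(size_map (fun c => decode m c.1 c.2)) /b /=.
move/card_uniqP: uniq_decoded => <-; apply: eq_card => f; rewrite inE.
apply/idP/mapP => [f_fix1 | [c /good_ok [tm ot zs oq rc] ->]].
  have [oq rc fdec] := encode_fix1 f_fix1; have /and3P [fo _ _] := f_fix1.
  exists (nat_of_ord (f ord0), descents f); last by rewrite /= fdec.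
  rewrite mem_filter /good /= oq eqxx rc /=; apply/allpairsP.
  exists (nat_of_ord (f ord0), descents f); rewrite /= mem_index_iota mem_words size_descents.
  by rewrite eqxx -oq ones_descents // ltn_ord.
by have := decode_fix1 tm ot zs rc; rewrite oq.
Qed.

Lemma b_one m : b m.+1 1 = m.+1.
Proof.
rewrite b_sum (eq_big_nat _ _ (F2 := fun=> 1)) ?sum_nat_const_nat ?muln1 ?subn0 //.
by move=> t /andP [_ tm]; rewrite nreach_q0 -ltnS tm.
Qed.

Lemma b_two m : b m.+2 2 = m.+1 * m.
Proof.
rewrite b_sum -[1]/(0 + 1) big_addn (eq_big_nat _ _ (F2 := fun=> m)).
  by rewrite sum_nat_const_nat subn0.
by move=> t /andP [_ tm]; rewrite add0n addn1 nreach_one.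
Qed.

Lemma b_shift m q : b m.+3 q.+3 = (m.+1 - q) * 'C(m.+1, q.+2) + b m.+1 q.+1.
Proof.
rewrite !b_sum -{1}(addn2 q) big_addn subSS subn1 /=.
rewrite (eq_big_nat _ _ (F2 := fun t => 'C(m.+1, q.+2) + nreach m q t)).
  by rewrite big_split sum_nat_const_nat.
by move=> t /andP [_ tm]; rewrite addn2 nreach_shift2 //; lia.
Qed.

Theorem lemma3p8 :
  (forall n : nat, 1 <= n -> b n 1 = n) /\
  b 2 2 = 0 /\
  (forall n p : nat, 2 <= p -> p <= n ->
     b n p = (n - p + 1) * 'C(n - 2, p - 1) + b (n - 2) (p - 2)).
Proof.
have b_rec n p : 2 <= p -> p <= n ->
    b n p = (n - p + 1) * 'C(n - 2, p - 1) + b (n - 2) (p - 2).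
  case: p => [|[|[|q]]] // _.
    by case: n => [|[|m]] // _; rewrite b_two !subSS subn0 bin1 addn0 addn1.
  by case: n => [|[|[|m]]] // qm; rewrite b_shift !subSS !subn0 addn1 -subSn //; lia.
split; first by case=> [|m] // _; exact: b_one.
by split; first rewrite b_rec.
Qed.
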